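(* Let $\mathcal{K}\subset\mathbb{R}^l$ be a closed convex cone with non-empty interior, with dual cone $\mathcal{K}^*=\{y\mid y^\top x\ge 0\ \forall x\in\mathcal{K}\}$, and write $a\preceq_{\mathcal{K}} b$ for $b-a\in\mathcal{K}$. Let $G,G^i\in\mathbb{R}^{l\times n}$ and $g,g^i\in\mathbb{R}^l$ be such that the sets $\{y\in\mathbb{R}^n\mid Gy\preceq_{\mathcal{K}} g\}$ and $\{y\in\mathbb{R}^n\mid G^iy\preceq_{\mathcal{K}} g^i\}$ are non-empty, convex and compact. Let $R,R^i\in\mathbb{R}^{n\times n}$ be rotation matrices and $p,p^i\in\mathbb{R}^n$ positions, and define $$\mathbb{S}=\{z\in\mathbb{R}^n\mid \exists y\in\mathbb{R}^n:\ Gy\preceq_{\mathcal{K}} g,\ z=Ry+p\},\qquad \mathbb{S}^i=\{z\in\mathbb{R}^n\mid \exists y\in\mathbb{R}^n:\ G^iy\preceq_{\mathcal{K}} g^i,\ z=R^iy+p^i\},$$ and $\mathrm{dist}(\mathbb{S},\mathbb{S}^i)=\min_{z_1\in\mathbb{S},\,z_2\in\mathbb{S}^i}\|z_1-z_2\|_2$. Then $\mathrm{dist}(\mathbb{S},\mathbb{S}^i)>0$ if and only if there exist $\lambda,\nu\in\mathcal{K}^*$ such that $$-\lambda^\top\big(GR^\top(p-p^i)+g\big)-\nu^\top g^i>0,\qquad \|\lambda^\top G R^\top\|_2\le 1,\qquad \lambda^\top GR^\top=-\nu^\top G^iR^{i\top}.$$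
   Context: In the paper, $\mathbb{S}$ is the region occupied by the controlled agent and $\mathbb{S}^i$ the region occupied by the $i$-th obstacle at a given prediction time step, with positions $p=Cx+c$ and $p^i=Co^i$ obtained from the states; here the positions are treated as given vectors. *)

From HB Require Import structures.
From mathcomp Require Import all_boot all_order all_algebra.
From mathcomp Require Import all_classical all_reals all_analysis.
Set Implicit Arguments. Unset Strict Implicit. Unset Printing Implicit Defensive.
Import Order.TTheory GRing.Theory Num.Theory.
Import numFieldNormedType.Exports.
Local Open Scope classical_set_scope.
Local Open Scope ring_scope.

Section Defs.
Variable R : realType.

Definition dotv (k : nat) (u v : 'cV[R]_k) : R := (u^T *m v) 0 0.

(* Euclidean (Frobenius) 2-norm; on row/column vectors it is the usual ||.||_2 *)
Definition norm2 (a b : nat) (A : 'M[R]_(a, b)) : R :=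
  Num.sqrt (\sum_(i < a) \sum_(j < b) A i j ^+ 2).

Definition is_cone (k : nat) (K : set 'cV[R]_k) : Prop :=
  forall x, K x -> forall t : R, 0 <= t -> K (t *: x).

Definition proper_cone (k : nat) (K : set 'cV[R]_k) : Prop :=
  [/\ closed K, convex_set K, is_cone K & (K°) !=set0].

Definition dual_cone (k : nat) (K : set 'cV[R]_k) : set 'cV[R]_k :=
  [set y | forall x, K x -> 0 <= dotv y x].

Definition cone_le (k : nat) (K : set 'cV[R]_k) (a b : 'cV[R]_k) : Prop :=
  K (b - a).

Definition rotation (n : nat) (Q : 'M[R]_n) : Prop :=
  Q^T *m Q = 1%:M /\ \det Q = 1.

Definition conic_set (l n : nat) (K : set 'cV[R]_l) (G : 'M[R]_(l, n))
  (g : 'cV[R]_l) : set 'cV[R]_n := [set y | cone_le K (G *m y) g].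

Definition placed_set (l n : nat) (K : set 'cV[R]_l) (G : 'M[R]_(l, n))
  (g : 'cV[R]_l) (Q : 'M[R]_n) (p : 'cV[R]_n) : set 'cV[R]_n :=
  [set z | exists y, conic_set K G g y /\ z = Q *m y + p].

(* dist(S1,S2) = inf of ||z1 - z2||_2 over z1 in S1, z2 in S2
   (a minimum whenever S1, S2 are non-empty compact) *)
Definition set_dist (n : nat) (S1 S2 : set 'cV[R]_n) : R :=
  inf [set r | exists z1 z2, S1 z1 /\ S2 z2 /\ r = norm2 (z1 - z2)].

End Defs.

(* The "if" direction is weak duality: for z1 = Q y1 + p in S and z2 = Qi y2 + pi in Si,
   the dual-cone conditions and Cauchy-Schwarz bound the certificate value by |z1 - z2|.
   For the converse, minimize the penalty
     |G y1 + k1 - g|^2 + |Gi y2 + k2 - gi|^2 + |(Q y1 + p) - (Qi y2 + pi)|^2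
   over y1, y2 and k1, k2 in K. Compactness of the conic sets forces G d in -K only for
   d = 0, which makes the penalty coercive, so a minimizer exists. By first-order
   optimality its residuals (a1, a2, w) are multipliers: a1, a2 lie in K*, G^T a1 = -Q^T w,
   Gi^T a2 = Qi^T w, and shrinking the minimizer towards the origin gives
   |a1|^2 + |a2|^2 + |w|^2 <= w.(p - pi) - a1.g - a2.gi. The residuals cannot all vanish
   since S and Si are at positive distance, and scaling (a1, a2) by 1 / (1 + |w|) yields
   the certificate. *)

From HB Require Import structures.
From mathcomp Require Import all_boot all_order all_algebra.
From mathcomp Require Import all_classical all_reals all_analysis.
From mathcomp Require Import ring lra.
Set Implicit Arguments. Unset Strict Implicit. Unset Printing Implicit Defensive.
Import Order.TTheory GRing.Theory Num.Theory.
Import numFieldNormedType.Exports.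
Local Open Scope classical_set_scope.
Local Open Scope ring_scope.

Section InnerProduct.
Variable R : realType.
Implicit Types (k : nat) (a : R).

Lemma dotvE k (u v : 'cV[R]_k) : dotv u v = \sum_i u i 0 * v i 0.
Proof. by rewrite /dotv mxE; apply: eq_bigr => i _; rewrite mxE. Qed.

Lemma dotvC k (u v : 'cV[R]_k) : dotv u v = dotv v u.
Proof. by rewrite !dotvE; apply: eq_bigr => i _; rewrite mulrC. Qed.

Lemma dotvDr k (u v w : 'cV[R]_k) : dotv u (v + w) = dotv u v + dotv u w.
Proof. by rewrite !dotvE -big_split; apply: eq_bigr => i _; rewrite mxE mulrDr. Qed.

Lemma dotvDl k (u v w : 'cV[R]_k) : dotv (v + w) u = dotv v u + dotv w u.
Proof. by rewrite dotvC dotvDr !(dotvC u). Qed.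

Lemma dotvZr k a (u v : 'cV[R]_k) : dotv u (a *: v) = a * dotv u v.
Proof. by rewrite !dotvE mulr_sumr; apply: eq_bigr => i _; rewrite mxE mulrCA. Qed.

Lemma dotvZl k a (u v : 'cV[R]_k) : dotv (a *: u) v = a * dotv u v.
Proof. by rewrite dotvC dotvZr dotvC. Qed.

Lemma dotvNr k (u v : 'cV[R]_k) : dotv u (- v) = - dotv u v.
Proof. by rewrite -scaleN1r dotvZr mulN1r. Qed.

Lemma dotvNl k (u v : 'cV[R]_k) : dotv (- u) v = - dotv u v.
Proof. by rewrite dotvC dotvNr dotvC. Qed.

Lemma dotvBr k (u v w : 'cV[R]_k) : dotv u (v - w) = dotv u v - dotv u w.
Proof. by rewrite dotvDr dotvNr. Qed.

Lemma dotvBl k (u v w : 'cV[R]_k) : dotv (v - w) u = dotv v u - dotv w u.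
Proof. by rewrite dotvDl dotvNl. Qed.

Lemma dotv0r k (u : 'cV[R]_k) : dotv u 0 = 0.
Proof. by rewrite dotvE big1 // => i _; rewrite mxE mulr0. Qed.

Lemma dotv_mulmxr k m (u : 'cV[R]_k) (A : 'M[R]_(k, m)) (v : 'cV[R]_m) :
  dotv u (A *m v) = dotv (A^T *m u) v.
Proof. by rewrite /dotv trmx_mul trmxK mulmxA. Qed.

Definition sqnorm k (u : 'cV[R]_k) := dotv u u.

Lemma sqnormE k (u : 'cV[R]_k) : sqnorm u = \sum_i u i 0 ^+ 2.
Proof. by rewrite /sqnorm dotvE; apply: eq_bigr => i _; rewrite expr2. Qed.

Lemma sqnorm_ge0 k (u : 'cV[R]_k) : 0 <= sqnorm u.
Proof. by rewrite sqnormE sumr_ge0 // => i _; rewrite sqr_ge0. Qed.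

Lemma sqnorm0 k : sqnorm (0 : 'cV[R]_k) = 0.
Proof. by rewrite /sqnorm dotv0r. Qed.

Lemma sqnorm_eq0 k (u : 'cV[R]_k) : (sqnorm u == 0) = (u == 0).
Proof.
apply/idP/eqP => [|->]; last by rewrite sqnorm0.
rewrite sqnormE psumr_eq0 => [/allP u0|i _]; last exact: sqr_ge0.
apply/matrixP => i j; rewrite ord1 mxE; apply/eqP; rewrite -sqrf_eq0.
exact: (implyP (u0 i (mem_index_enum _))).
Qed.

Lemma sqnorm_gt0 k (u : 'cV[R]_k) : (0 < sqnorm u) = (u != 0).
Proof. by rewrite lt_neqAle sqnorm_ge0 andbT eq_sym sqnorm_eq0. Qed.

Lemma sqr_coord_le_sqnorm k (u : 'cV[R]_k) i : u i 0 ^+ 2 <= sqnorm u.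
Proof. by rewrite sqnormE (bigD1 i) //= lerDl sumr_ge0 // => j _; exact: sqr_ge0. Qed.

Lemma sqnormDZ k a (u v : 'cV[R]_k) :
  sqnorm (u + a *: v) = sqnorm u + 2 * a * dotv u v + a ^+ 2 * sqnorm v.
Proof. by rewrite /sqnorm !(dotvDl, dotvDr, dotvZl, dotvZr) (dotvC v u); ring. Qed.

Lemma sqnormZ k a (u : 'cV[R]_k) : sqnorm (a *: u) = a ^+ 2 * sqnorm u.
Proof. by rewrite /sqnorm dotvZl dotvZr mulrA expr2. Qed.

Lemma sqnormN k (u : 'cV[R]_k) : sqnorm (- u) = sqnorm u.
Proof. by rewrite /sqnorm dotvNl dotvNr opprK. Qed.

Lemma sqnormD_le k (u v : 'cV[R]_k) : sqnorm (u + v) <= 2 * sqnorm u + 2 * sqnorm v.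
Proof.
rewrite !sqnormE !mulr_sumr -big_split /=; apply: ler_sum => i _; rewrite mxE.
by have := sqr_ge0 (u i 0 - v i 0); nra.
Qed.

Lemma dotv_ge0_eq0 k (v : 'cV[R]_k) : (forall d, 0 <= dotv v d) -> v = 0.
Proof.
move=> v_ge0; apply/eqP; rewrite -sqnorm_eq0 eq_le sqnorm_ge0 andbT.
by rewrite -oppr_ge0 /sqnorm -dotvNr.
Qed.

Lemma norm2_cV k (u : 'cV[R]_k) : norm2 u = Num.sqrt (sqnorm u).
Proof. by rewrite /norm2 sqnormE; congr Num.sqrt; apply: eq_bigr => i _; rewrite big_ord1. Qed.

Lemma norm2_rV k (u : 'rV[R]_k) : norm2 u = Num.sqrt (sqnorm u^T).
Proof.
by rewrite /norm2 sqnormE big_ord1; congr Num.sqrt; apply: eq_bigr => i _; rewrite mxE.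
Qed.

Lemma dotv_le_norm2 k (w v : 'cV[R]_k) : norm2 w <= 1 -> dotv w v <= norm2 v.
Proof.
rewrite !norm2_cV -sqrtr1 ler_sqrt // => w_le1; set s := Num.sqrt (sqnorm v).
have s_ge0 : 0 <= s by rewrite sqrtr_ge0.
have sE : s ^+ 2 = sqnorm v by rewrite sqr_sqrtr // sqnorm_ge0.
have [s0|s_gt0] := eqVneq s 0.
  have /eqP -> : v == 0 by rewrite -sqnorm_eq0 -sE s0 expr0n.
  by rewrite dotv0r.
(* expand 0 <= |v - |v| w|^2 *)
have := sqnorm_ge0 (v + (- s) *: w); rewrite sqnormDZ -sE (dotvC v w).
have := sqnorm_ge0 w; have : 0 < s by rewrite lt_neqAle eq_sym s_gt0.
nra.
Qed.

End InnerProduct.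

Section SetDistance.
Variables (R : realType) (n : nat) (S1 S2 : set 'cV[R]_n).

Lemma set_dist_le z1 z2 : S1 z1 -> S2 z2 -> set_dist S1 S2 <= norm2 (z1 - z2).
Proof.
move=> S1z1 S2z2; apply: ge_inf; last by exists z1, z2.
by exists 0 => _ [? [? [_ [_ ->]]]]; rewrite norm2_cV sqrtr_ge0.
Qed.

Lemma set_dist_ge c : S1 !=set0 -> S2 !=set0 ->
  (forall z1 z2, S1 z1 -> S2 z2 -> c <= norm2 (z1 - z2)) -> c <= set_dist S1 S2.
Proof.
move=> [z1 S1z1] [z2 S2z2] c_le; apply: lb_le_inf; first by exists (norm2 (z1 - z2)), z1, z2.
by move=> _ [y1 [y2 [S1y1 [S2y2 ->]]]]; exact: c_le.
Qed.

End SetDistance.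

Lemma placed_set_neq0 (R : realType) l n (K : set 'cV[R]_l) G g (Q : 'M[R]_n) p :
  conic_set K G g !=set0 -> placed_set K G g Q p !=set0.
Proof. by move=> [y Sy]; exists (Q *m y + p), y. Qed.

Section WeakDuality.
Variables (R : realType) (l n : nat) (K : set 'cV[R]_l).
Variables (G Gi : 'M[R]_(l, n)) (g gi : 'cV[R]_l) (Q Qi : 'M[R]_n) (p pi : 'cV[R]_n).
Hypotheses (QTQ : Q^T *m Q = 1%:M) (QiTQi : Qi^T *m Qi = 1%:M).
Variables (lam nu : 'cV[R]_l).
Hypotheses (lam_dual : dual_cone K lam) (nu_dual : dual_cone K nu).
Hypotheses (lam_norm : norm2 (lam^T *m G *m Q^T) <= 1)
           (lam_nu : lam^T *m G *m Q^T = - (nu^T *m Gi *m Qi^T)).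

Lemma dual_bound_le_dist z1 z2 :
  placed_set K G g Q p z1 -> placed_set K Gi gi Qi pi z2 ->
  - dotv lam (G *m Q^T *m (p - pi) + g) - dotv nu gi <= norm2 (z1 - z2).
Proof.
move=> [y1 [y1_in ->]] [y2 [y2_in ->]].
set w := (lam^T *m G *m Q^T)^T.
have wE : w = Q *m (G^T *m lam) by rewrite /w !trmx_mul !trmxK mulmxA.
have wNE : - w = Qi *m (Gi^T *m nu).
  by rewrite /w lam_nu linearN /= opprK !trmx_mul !trmxK mulmxA.
have e_p : dotv lam (G *m Q^T *m (p - pi)) = dotv w (p - pi).
  by rewrite dotv_mulmxr wE !trmx_mul trmxK mulmxA.
have e_y1 : dotv w (Q *m y1) = dotv lam (G *m y1).
  by rewrite dotv_mulmxr wE mulmxA QTQ mul1mx dotv_mulmxr.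
have e_y2 : dotv w (Qi *m y2) = - dotv nu (Gi *m y2).
  by rewrite -(opprK w) dotvNl wNE dotv_mulmxr mulmxA QiTQi mul1mx dotv_mulmxr.
have := lam_dual y1_in; have := nu_dual y2_in; rewrite !dotvBr.
have /(dotv_le_norm2 (Qi *m y2 + pi - (Q *m y1 + p))) : norm2 w <= 1.
  by move: lam_norm; rewrite norm2_rV norm2_cV.
rewrite -opprB norm2_cV sqnormN -norm2_cV !(dotvDr, dotvNr) e_p e_y1 e_y2 dotvBr.
lra.
Qed.

End WeakDuality.

Lemma dist_pos_of_certificate (R : realType) l n (K : set 'cV[R]_l)
  (G Gi : 'M[R]_(l, n)) (g gi : 'cV[R]_l) (Q Qi : 'M[R]_n) (p pi : 'cV[R]_n) :
  Q^T *m Q = 1%:M -> Qi^T *m Qi = 1%:M ->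
  conic_set K G g !=set0 -> conic_set K Gi gi !=set0 ->
  (exists lam nu : 'cV[R]_l,
     [/\ dual_cone K lam, dual_cone K nu,
         - dotv lam (G *m Q^T *m (p - pi) + g) - dotv nu gi > 0,
         norm2 (lam^T *m G *m Q^T) <= 1
       & lam^T *m G *m Q^T = - (nu^T *m Gi *m Qi^T)]) ->
  0 < set_dist (placed_set K G g Q p) (placed_set K Gi gi Qi pi).
Proof.
move=> QTQ QiTQi /placed_set_neq0 S_ne /placed_set_neq0 Si_ne [lam [nu [? ? bound_gt0 ? ?]]].
apply: (lt_le_trans bound_gt0); apply: set_dist_ge => // z1 z2.
exact: dual_bound_le_dist.
Qed.

Lemma fst_continuous (U V : topologicalType) : continuous (@fst U V).
Proof. by move=> [a b]; exact: cvg_fst. Qed.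

Lemma snd_continuous (U V : topologicalType) : continuous (@snd U V).
Proof. by move=> [a b]; exact: cvg_snd. Qed.

Lemma comp_continuous (S T U : topologicalType) (f : S -> T) (h : T -> U) :
  continuous f -> continuous h -> continuous (fun x => h (f x)).
Proof.
by move=> f_cont h_cont x; apply: (continuous_comp (f := f)); [exact: f_cont | exact: h_cont].
Qed.

Section MatrixTopology.
Variable R : realType.

Lemma lipschitz_continuous (U V : normedModType R) (f : U -> V) C :
  (forall x y, `|f x - f y| <= C * `|x - y|) -> continuous f.
Proof.
move=> f_lip x; apply/cvgrPdist_lt => e e_gt0.
have C1_gt0 : 0 < `|C| + 1 by rewrite ltr_wpDl.
near=> z; apply: le_lt_trans (f_lip x z) _.
have : `|x - z| < e / (`|C| + 1).
  by near: z; apply: cvgr_dist_lt => //; rewrite divr_gt0.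
rewrite ltr_pdivlMr // => /(le_lt_trans _); apply.
by rewrite mulrC ler_wpM2l // (le_trans (ler_norm C)) // lerDl.
Unshelve. all: by end_near. Qed.

Lemma mx_norm_coord_le m n (A : 'M[R]_(m, n)) i j : `|A i j| <= `|A|.
Proof.
rewrite [leRHS]/Num.Def.normr /= mx_normrE.
exact: (le_bigmax _ (fun ij => `|A ij.1 ij.2|) (i, j)).
Qed.

Lemma mx_norm_le m n (A : 'M[R]_(m, n)) c :
  0 <= c -> (forall i j, `|A i j| <= c) -> `|A| <= c.
Proof.
by move=> c_ge0 A_le; rewrite [leLHS]/Num.Def.normr /= mx_normrE (bigmax_le _ c_ge0).
Qed.

Lemma trmx_continuous m n : continuous (@trmx R m n).
Proof.
apply: (@lipschitz_continuous _ _ _ 1) => A B; rewrite mul1r -linearB /=.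
by apply: mx_norm_le => // i j; rewrite mxE mx_norm_coord_le.
Qed.

Lemma mulmx_continuous m n k (A : 'M[R]_(m, n)) :
  continuous (fun B : 'M[R]_(n, k) => A *m B).
Proof.
apply: (@lipschitz_continuous _ _ _ (n%:R * `|A|)) => B C; rewrite -mulmxBr.
apply: mx_norm_le => [|i j]; first by rewrite !mulr_ge0.
rewrite mxE (le_trans (ler_norm_sum _ _ _)) //.
apply: le_trans (_ : \sum_(t < n) `|A| * `|B - C| <= _).
  by apply: ler_sum => t _; rewrite normrM ler_pM // mx_norm_coord_le.
by rewrite sumr_const card_ord -mulrA mulr_natl.
Qed.

Lemma sqnorm_continuous k : continuous (@sqnorm R k).
Proof.
have -> : @sqnorm R k = fun v => \sum_(i <- index_enum 'I_k) v i 0 ^+ 2.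
  by apply: funext => v; rewrite sqnormE.
apply: continuous_big => [|i _ v]; first exact: add_continuous.
by apply: continuousM; exact: coord_continuous.
Qed.

Lemma closed_sqnorm_le k M : closed [set v : 'cV[R]_k | sqnorm v <= M].
Proof. exact: (closed_comp (fun v _ => @sqnorm_continuous k v)) (@closed_le R M). Qed.

Lemma sqnorm_le_compact k M : compact [set v : 'cV[R]_k | sqnorm v <= M].
Proof.
(* the library's Heine-Borel theorem is stated for row vectors only *)
have -> : [set v : 'cV[R]_k | sqnorm v <= M] = trmx @` [set v | sqnorm v^T <= M].
  by apply/seteqP; split => [v ? | _ [v ? <-] //]; exists v^T; rewrite /= ?trmxK.
apply: (@continuous_compact _ _ (@trmx R 1 k)).
  exact: continuous_subspaceT (@trmx_continuous 1 k).
apply: bounded_closed_compact; last first.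
  exact: (proj1 (continuous_closedP _) (@trmx_continuous 1 k) _ (@closed_sqnorm_le k M)).
exists (1 + `|M|); split; first by rewrite realE addr_ge0.
move=> r Mr v /= v_le; apply: le_trans (ltW Mr).
apply: mx_norm_le => [|i j]; first by rewrite addr_ge0.
have := le_trans (sqr_coord_le_sqnorm v^T j) v_le; rewrite ord1 mxE.
rewrite -real_normK ?num_real //; have := ler_norm M; have := normr_ge0 (v i j).
nra.
Qed.

End MatrixTopology.

Section ProperCone.
Variables (R : realType) (l : nat) (K : set 'cV[R]_l).
Hypothesis K_proper : proper_cone K.

Lemma proper_cone_closed : closed K.
Proof. by case: K_proper. Qed.

Lemma proper_coneZ x t : K x -> 0 <= t -> K (t *: x).
Proof. by case: K_proper => _ _ K_cone _ Kx; exact: K_cone. Qed.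

Lemma proper_coneD a b : K a -> K b -> K (a + b).
Proof.
case: K_proper => _ K_convex _ _ Ka Kb.
have half_ge0 : (0 : R) <= 2^-1 by rewrite invr_ge0.
have half_le1 : (2^-1 : R) <= 1 by rewrite invf_le1 // ler1n.
have := K_convex a b (Itv01 half_ge0 half_le1); rewrite !inE => /(_ Ka Kb).
rewrite /conv /= /unstable.onem (_ : 1 - 2^-1 = 2^-1 :> R); last by field.
move=> /proper_coneZ /(_ (ler0n _ 2)).
by rewrite scalerDr !scalerA mulfV ?pnatr_eq0 // !scale1r.
Qed.

End ProperCone.

Section ConicSet.
Variables (R : realType) (l n : nat) (K : set 'cV[R]_l).
Variables (G : 'M[R]_(l, n)) (g : 'cV[R]_l).
Hypotheses (K_proper : proper_cone K) (S_ne : conic_set K G g !=set0)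
  (S_compact : compact (conic_set K G g)).

Lemma conic_set_recession d : K (- (G *m d)) -> d = 0.
Proof.
move=> Kd; apply/eqP; apply: contraT => d_neq0.
(* the ray y0 + t d, t >= 0, would lie in the bounded set S *)
have [y0 y0_in] := S_ne; have [M [_ M_bound]] := compact_bounded S_compact.
have d_gt0 : 0 < `|d| by rewrite normr_gt0.
set r := `|M| + 1; set t := (r + `|y0| + 1) / `|d|.
have t_ge0 : 0 <= t by rewrite /t /r divr_ge0 // !addr_ge0.
have y_in : conic_set K G g (y0 + t *: d).
  rewrite /conic_set /cone_le /= mulmxDr -scalemxAr opprD addrA -scalerN.
  by apply: proper_coneD => //; exact: proper_coneZ.
have y_le : `|y0 + t *: d| <= r.
  by apply: M_bound y_in; rewrite /r (le_lt_trans (ler_norm M)) ?ltrDl.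
have := ler_normB (y0 + t *: d) y0; rewrite addrC addKr normrZ ger0_norm //.
by rewrite /t divfK ?gt_eqF //; lra.
Qed.

Let sphere := [set x : 'cV[R]_n * 'cV[R]_l | sqnorm x.1 + sqnorm x.2 = 1 /\ K x.2].

Let sphere_compact : compact sphere.
Proof.
have sqnormD_cont : continuous (fun x : 'cV[R]_n * 'cV[R]_l => sqnorm x.1 + sqnorm x.2).
  move=> x; apply: cvgD.
    exact: comp_continuous (@fst_continuous _ _) (@sqnorm_continuous _ _) x.
  exact: comp_continuous (@snd_continuous _ _) (@sqnorm_continuous _ _) x.
apply: (@subclosed_compact _ _ ([set v | sqnorm v <= 1] `*` [set v | sqnorm v <= 1])).
- apply: closedI.
    exact: (proj1 (continuous_closedP _) sqnormD_cont _ (closed_eq (y := 1))).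
  exact: (proj1 (continuous_closedP _) (@snd_continuous _ _) _ (proper_cone_closed K_proper)).
- by apply: compact_setX; exact: sqnorm_le_compact.
- by move=> [y k] [/= <- _]; split; rewrite /= ?lerDl ?lerDr sqnorm_ge0.
Qed.

Lemma conic_set_coercive :
  exists2 c, 0 < c & forall y k, K k -> c * (sqnorm y + sqnorm k) <= sqnorm (G *m y + k).
Proof.
have into_sphere y k : K k -> 0 < sqnorm y + sqnorm k ->
    let a := (Num.sqrt (sqnorm y + sqnorm k))^-1 in sphere (a *: y, a *: k).
  move=> Kk s_gt0 a; split => /=; last by apply: proper_coneZ; rewrite ?invr_ge0 ?sqrtr_ge0.
  by rewrite !sqnormZ -mulrDr exprVn sqr_sqrtr ?ltW // mulVf ?gt_eqF.
have zero_case y k c :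
    sqnorm y + sqnorm k <= 0 -> c * (sqnorm y + sqnorm k) <= sqnorm (G *m y + k).
  move=> s_le0; have -> : sqnorm y + sqnorm k = 0.
    by apply/eqP; rewrite eq_le s_le0 addr_ge0 ?sqnorm_ge0.
  by rewrite mulr0 sqnorm_ge0.
have [sphere_ne|sphere0] := pselect (sphere !=set0); last first.
  exists 1 => // y k Kk; have [s_gt0|] := ltP 0 (sqnorm y + sqnorm k); last exact: zero_case.
  by case: sphere0; eexists; exact: (into_sphere y k Kk s_gt0).
have h_cont : continuous (fun x : 'cV[R]_n * 'cV[R]_l => sqnorm (G *m x.1 + x.2)).
  apply: (comp_continuous _ (@sqnorm_continuous _ _)) => x.
  apply: cvgD; last exact: snd_continuous.
  exact: comp_continuous (@fst_continuous _ _) (@mulmx_continuous _ _ _ _ G) x.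
have [[d k0] /set_mem [/= dk0_unit Kk0] dk0_min] :=
  compact_EVT_min sphere_ne sphere_compact (continuous_subspaceT h_cont).
exists (sqnorm (G *m d + k0)).
  rewrite sqnorm_gt0; apply/eqP => Gdk0.
  have k0E : k0 = - (G *m d) by rewrite -(addKr (G *m d) k0) Gdk0 addr0.
  have d0 : d = 0 by apply: conic_set_recession; rewrite -k0E.
  by move: dk0_unit; rewrite k0E d0 mulmx0 oppr0 !sqnorm0 addr0 => /esym/eqP; rewrite oner_eq0.
move=> y k Kk; have [s_gt0|] := ltP 0 (sqnorm y + sqnorm k); last exact: zero_case.
have /= := dk0_min _ (mem_set (into_sphere y k Kk s_gt0)).
by rewrite -scalemxAr -scalerDr sqnormZ exprVn sqr_sqrtr ?(ltW s_gt0) // mulrC ler_pdivlMr.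
Qed.

Lemma conic_residual_bounded V : exists M, forall y k, K k ->
  sqnorm (G *m y + k - g) <= V -> sqnorm y <= M /\ sqnorm k <= M.
Proof.
have [c c_gt0 c_le] := conic_set_coercive.
exists ((2 * V + 2 * sqnorm g) / c) => y k Kk res_le.
have : c * (sqnorm y + sqnorm k) <= 2 * V + 2 * sqnorm g.
  apply: le_trans (c_le y k Kk) _; rewrite -(subrK g (G *m y + k)).
  by apply: le_trans (sqnormD_le _ _) _; lra.
rewrite -ler_pdivlMl // => s_le; have := sqnorm_ge0 y; have := sqnorm_ge0 k.
by rewrite mulrC; split; lra.
Qed.

End ConicSet.

Lemma sublevel_compact_min (T : topologicalType) (R : realType) (f : T -> R)
    (D C : set T) x0 :
  D x0 -> closed D -> continuous f -> compact C ->
  D `&` [set x | f x <= f x0] `<=` C ->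
  exists2 x, D x & forall y, D y -> f x <= f y.
Proof.
move=> Dx0 D_closed f_cont C_compact sub_C.
set L := D `&` [set x | f x <= f x0].
have L_compact : compact L.
  apply: subclosed_compact C_compact sub_C; apply: closedI => //.
  exact: (proj1 (continuous_closedP _) f_cont _ (@closed_le _ _)).
have [|x /set_mem [Dx _] x_min] := compact_EVT_min _ L_compact (continuous_subspaceT f_cont).
  by exists x0; split => /=.
exists x => // y Dy; have [y_le|y_gt] := leP (f y) (f x0).
  by apply: x_min; apply: mem_set.
by apply: (le_trans _ (ltW y_gt)); apply: x_min; apply: mem_set; split => /=.
Qed.

Section Penalty.
Variables (R : realType) (l n : nat) (K : set 'cV[R]_l).
Variables (G Gi : 'M[R]_(l, n)) (g gi : 'cV[R]_l) (Q Qi : 'M[R]_n) (p pi : 'cV[R]_n).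

Local Notation point := (('cV[R]_n * 'cV[R]_l) * ('cV[R]_n * 'cV[R]_l))%type.

Definition feasible (x : point) := K x.1.2 /\ K x.2.2.

Definition penalty (x : point) :=
  sqnorm (G *m x.1.1 + x.1.2 - g) + sqnorm (Gi *m x.2.1 + x.2.2 - gi)
  + sqnorm (Q *m x.1.1 + p - (Qi *m x.2.1 + pi)).

Let y1_continuous : continuous (fun x : point => x.1.1).
Proof. exact: comp_continuous (@fst_continuous _ _) (@fst_continuous _ _). Qed.

Let k1_continuous : continuous (fun x : point => x.1.2).
Proof. exact: comp_continuous (@fst_continuous _ _) (@snd_continuous _ _). Qed.

Let y2_continuous : continuous (fun x : point => x.2.1).
Proof. exact: comp_continuous (@snd_continuous _ _) (@fst_continuous _ _). Qed.

Let k2_continuous : continuous (fun x : point => x.2.2).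
Proof. exact: comp_continuous (@snd_continuous _ _) (@snd_continuous _ _). Qed.

Lemma penalty_continuous : continuous penalty.
Proof.
have mul_cont m (A : 'M[R]_(m, n)) (u : point -> 'cV[R]_n) :
    continuous u -> continuous (fun x => A *m u x).
  by move=> u_cont; exact: comp_continuous u_cont (@mulmx_continuous _ _ _ _ A).
have sq_cont k (u : point -> 'cV[R]_k) : continuous u -> continuous (fun x => sqnorm (u x)).
  by move=> u_cont; exact: comp_continuous u_cont (@sqnorm_continuous _ _).
move=> x; apply: cvgD; first apply: cvgD.
- apply: sq_cont => {}x; apply: cvgB; last exact: cvg_cst.
  by apply: cvgD; [exact: (mul_cont _ _ _ y1_continuous) | exact: k1_continuous].
- apply: sq_cont => {}x; apply: cvgB; last exact: cvg_cst.
  by apply: cvgD; [exact: (mul_cont _ _ _ y2_continuous) | exact: k2_continuous].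
- apply: sq_cont => {}x; apply: cvgB; apply: cvgD.
  + exact: (mul_cont _ _ _ y1_continuous).
  + exact: cvg_cst.
  + exact: (mul_cont _ _ _ y2_continuous).
  + exact: cvg_cst.
Qed.

Hypotheses (K_proper : proper_cone K).
Hypotheses (S_ne : conic_set K G g !=set0) (S_compact : compact (conic_set K G g)).
Hypotheses (Si_ne : conic_set K Gi gi !=set0) (Si_compact : compact (conic_set K Gi gi)).

Lemma penalty_has_min :
  exists2 x, feasible x & forall x', feasible x' -> penalty x <= penalty x'.
Proof.
have [[y1 y1_in] [y2 y2_in]] := (S_ne, Si_ne).
set x0 : point := ((y1, g - G *m y1), (y2, gi - Gi *m y2)).
have [M1 M1_bound] := conic_residual_bounded K_proper S_ne S_compact (penalty x0).
have [M2 M2_bound] := conic_residual_bounded K_proper Si_ne Si_compact (penalty x0).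
pose ball k M := [set v : 'cV[R]_k | sqnorm v <= M].
apply: (@sublevel_compact_min _ _ _ _
  ((ball n M1 `*` ball l M1) `*` (ball n M2 `*` ball l M2)) x0).
- by split.
- have K_closed := proper_cone_closed K_proper.
  apply: closedI; apply: (proj1 (continuous_closedP _) _ _ K_closed).
    exact: k1_continuous.
  exact: k2_continuous.
- exact: penalty_continuous.
- by do 2?apply: compact_setX; exact: sqnorm_le_compact.
move=> [[y1' k1] [y2' k2]] [[/= Kk1 Kk2]]; rewrite /= {1}/penalty /= => pen_le.
have := sqnorm_ge0 (G *m y1' + k1 - g); have := sqnorm_ge0 (Gi *m y2' + k2 - gi).
have := sqnorm_ge0 (Q *m y1' + p - (Qi *m y2' + pi)) => gap_ge0 res2_ge0 res1_ge0.
have [y1_le k1_le] : sqnorm y1' <= M1 /\ sqnorm k1 <= M1 by apply: M1_bound => //; lra.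
have [y2_le k2_le] : sqnorm y2' <= M2 /\ sqnorm k2 <= M2 by apply: M2_bound => //; lra.
by split; split.
Qed.

End Penalty.

Lemma quadratic_lb_ge0 (R : realType) (A B : R) : 0 <= B ->
  (forall s, 0 < s -> s <= 1 -> 0 <= 2 * s * A + s ^+ 2 * B) -> 0 <= A.
Proof.
move=> B_ge0 quad_ge0; rewrite leNgt; apply/negP => A_lt0.
(* at [s = - A / (B - A + 1)] the quadratic is negative *)
set s := - A / (B - A + 1).
have den_gt0 : 0 < B - A + 1 by lra.
have s_gt0 : 0 < s by rewrite divr_gt0 // oppr_gt0.
have sE : s * (B - A + 1) = - A by rewrite /s divfK // gt_eqF.
have s_le1 : s <= 1 by nra.
by have := quad_ge0 s s_gt0 s_le1; nra.
Qed.

Lemma sqnorm3_first_order (R : realType) k1 k2 k3 (a1 d1 : 'cV[R]_k1)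
    (a2 d2 : 'cV[R]_k2) (a3 d3 : 'cV[R]_k3) :
  (forall s, 0 < s -> s <= 1 -> sqnorm a1 + sqnorm a2 + sqnorm a3 <=
     sqnorm (a1 + s *: d1) + sqnorm (a2 + s *: d2) + sqnorm (a3 + s *: d3)) ->
  0 <= dotv a1 d1 + dotv a2 d2 + dotv a3 d3.
Proof.
move=> a_min; apply: (@quadratic_lb_ge0 _ _ (sqnorm d1 + sqnorm d2 + sqnorm d3)).
  by rewrite !addr_ge0 ?sqnorm_ge0.
move=> s s_gt0 s_le1; have := a_min s s_gt0 s_le1; rewrite !sqnormDZ.
lra.
Qed.

Section AffineSteps.
Variables (R : realType) (k m : nat) (s : R).

Lemma residual_step (A : 'M[R]_(k, m)) y dy (c dc b : 'cV[R]_k) :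
  A *m (y + s *: dy) + (c + s *: dc) - b = A *m y + c - b + s *: (A *m dy + dc).
Proof.
rewrite mulmxDr -scalemxAr; apply/matrixP => i j; rewrite !mxE; ring.
Qed.

Lemma gap_step (A B : 'M[R]_(k, m)) y dy z dz (b c : 'cV[R]_k) :
  A *m (y + s *: dy) + b - (B *m (z + s *: dz) + c)
  = A *m y + b - (B *m z + c) + s *: (A *m dy - B *m dz).
Proof.
rewrite !mulmxDr -!scalemxAr; apply/matrixP => i j; rewrite !mxE; ring.
Qed.

End AffineSteps.

Section PenaltyMinimizer.
Variables (R : realType) (l n : nat) (K : set 'cV[R]_l).
Variables (G Gi : 'M[R]_(l, n)) (g gi : 'cV[R]_l) (Q Qi : 'M[R]_n) (p pi : 'cV[R]_n).
Hypothesis K_proper : proper_cone K.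
Variables (y1 y2 : 'cV[R]_n) (k1 k2 : 'cV[R]_l).
Hypotheses (Kk1 : K k1) (Kk2 : K k2).
Hypothesis x_min : forall x, feasible K x ->
  penalty G Gi g gi Q Qi p pi ((y1, k1), (y2, k2)) <= penalty G Gi g gi Q Qi p pi x.

Local Notation a1 := (G *m y1 + k1 - g).
Local Notation a2 := (Gi *m y2 + k2 - gi).
Local Notation w := (Q *m y1 + p - (Qi *m y2 + pi)).

Lemma penalty_min_first_order dy1 dk1 dy2 dk2 :
  (forall s, 0 < s -> s <= 1 -> K (k1 + s *: dk1) /\ K (k2 + s *: dk2)) ->
  0 <= dotv a1 (G *m dy1 + dk1) + dotv a2 (Gi *m dy2 + dk2)
       + dotv w (Q *m dy1 - Qi *m dy2).
Proof.
move=> step_feasible; apply: sqnorm3_first_order => s s_gt0 s_le1.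
have := @x_min ((y1 + s *: dy1, k1 + s *: dk1), (y2 + s *: dy2, k2 + s *: dk2))
  (step_feasible s s_gt0 s_le1).
by rewrite /penalty /= !residual_step gap_step.
Qed.

Lemma penalty_min_dual1 : dual_cone K a1.
Proof.
move=> k Kk; have := @penalty_min_first_order 0 k 0 0.
rewrite !(mulmx0, add0r, addr0, subrr, oppr0, dotv0r); apply => s s_gt0 _.
rewrite scaler0 addr0; split => //.
by apply: proper_coneD => //; apply: proper_coneZ => //; exact: ltW.
Qed.

Lemma penalty_min_dual2 : dual_cone K a2.
Proof.
move=> k Kk; have := @penalty_min_first_order 0 0 0 k.
rewrite !(mulmx0, add0r, addr0, subrr, oppr0, dotv0r); apply => s s_gt0 _.
rewrite scaler0 addr0; split => //.
by apply: proper_coneD => //; apply: proper_coneZ => //; exact: ltW.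
Qed.

Lemma penalty_min_stationary1 : G^T *m a1 = - (Q^T *m w).
Proof.
apply/eqP; rewrite -addr_eq0; apply/eqP/dotv_ge0_eq0 => d.
rewrite dotvDl -!dotv_mulmxr; have := @penalty_min_first_order d 0 0 0.
rewrite !(mulmx0, addr0, subr0, dotv0r).
by apply=> s _ _; rewrite !(scaler0, addr0).
Qed.

Lemma penalty_min_stationary2 : Gi^T *m a2 = Qi^T *m w.
Proof.
apply/eqP; rewrite -subr_eq0; apply/eqP/dotv_ge0_eq0 => d.
rewrite dotvBl -!dotv_mulmxr -dotvNr; have := @penalty_min_first_order 0 0 d 0.
rewrite !(mulmx0, addr0, sub0r, dotv0r, add0r).
by apply=> s _ _; rewrite !(scaler0, addr0).
Qed.

Lemma penalty_min_value :
  sqnorm a1 + sqnorm a2 + sqnorm w <= dotv w (p - pi) - dotv a1 g - dotv a2 gi.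
Proof.
(* shrink the minimizer towards the origin *)
have := @penalty_min_first_order (- y1) (- k1) (- y2) (- k2).
have -> : G *m - y1 + - k1 = - (a1 + g) by rewrite subrK mulmxN opprD.
have -> : Gi *m - y2 + - k2 = - (a2 + gi) by rewrite subrK mulmxN opprD.
have -> : Q *m - y1 - Qi *m - y2 = (p - pi) - w.
  by rewrite !mulmxN; apply/matrixP => i j; rewrite !mxE; ring.
have shrink_feasible s : 0 < s -> s <= 1 -> K (k1 + s *: - k1) /\ K (k2 + s *: - k2).
  move=> _ s_le1; have one_s : 0 <= 1 - s by lra.
  by rewrite !scalerN -{1}(scale1r k1) -{1}(scale1r k2) -!scalerBl; split; apply: proper_coneZ.
move=> /(_ shrink_feasible); move: a1 a2 w => b1 b2 z.
by rewrite /sqnorm !(dotvNr, dotvDr); lra.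
Qed.

Lemma penalty_min_gt0 :
  0 < set_dist (placed_set K G g Q p) (placed_set K Gi gi Qi pi) ->
  0 < sqnorm a1 + sqnorm a2 + sqnorm w.
Proof.
move=> dist_gt0; rewrite lt_def !addr_ge0 ?sqnorm_ge0 // andbT.
apply: contraTneq dist_gt0 => /eqP; rewrite !paddr_eq0 ?addr_ge0 ?sqnorm_ge0 //.
rewrite !sqnorm_eq0 => /andP [/andP [/eqP a1_0 /eqP a2_0] /eqP w_0].
have z1_in : placed_set K G g Q p (Q *m y1 + p).
  exists y1; split => //; move/eqP: a1_0; rewrite subr_eq0 => /eqP <-.
  by rewrite /conic_set /cone_le /= (addrC (G *m y1)) addrK.
have z2_in : placed_set K Gi gi Qi pi (Qi *m y2 + pi).
  exists y2; split => //; move/eqP: a2_0; rewrite subr_eq0 => /eqP <-.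
  by rewrite /conic_set /cone_le /= (addrC (Gi *m y2)) addrK.
have := set_dist_le z1_in z2_in; rewrite w_0 norm2_cV sqnorm0 sqrtr0.
by rewrite -leNgt.
Qed.

End PenaltyMinimizer.

Lemma dual_coneZ (R : realType) l (K : set 'cV[R]_l) t a :
  0 <= t -> dual_cone K a -> dual_cone K (t *: a).
Proof. by move=> t_ge0 Ka x Kx; rewrite dotvZl mulr_ge0 // Ka. Qed.

Section Certificate.
Variables (R : realType) (l n : nat) (K : set 'cV[R]_l).
Variables (G Gi : 'M[R]_(l, n)) (g gi : 'cV[R]_l) (Q Qi : 'M[R]_n) (p pi : 'cV[R]_n).
Hypotheses (QTQ : Q^T *m Q = 1%:M) (QiTQi : Qi^T *m Qi = 1%:M).

Lemma certificate_of_multipliers (a1 a2 : 'cV[R]_l) (w : 'cV[R]_n) :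
  dual_cone K a1 -> dual_cone K a2 ->
  G^T *m a1 = - (Q^T *m w) -> Gi^T *m a2 = Qi^T *m w ->
  0 < dotv w (p - pi) - dotv a1 g - dotv a2 gi ->
  exists lam nu : 'cV[R]_l,
     [/\ dual_cone K lam, dual_cone K nu,
         - dotv lam (G *m Q^T *m (p - pi) + g) - dotv nu gi > 0,
         norm2 (lam^T *m G *m Q^T) <= 1
       & lam^T *m G *m Q^T = - (nu^T *m Gi *m Qi^T)].
Proof.
move=> a1_dual a2_dual a1_stat a2_stat val_gt0.
have [QQT QiQiT] := (mulmx1C QTQ, mulmx1C QiTQi).
set t := (1 + norm2 w)^-1.
have t_gt0 : 0 < t by rewrite invr_gt0 ltr_wpDr // norm2_cV sqrtr_ge0.
have lamE : (t *: a1)^T *m G *m Q^T = (- (t *: w))^T.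
  apply: trmx_inj; rewrite !trmx_mul !trmxK -!scalemxAr a1_stat mulmxN mulmxA QQT mul1mx.
  by rewrite scalerN.
have nuE : (t *: a2)^T *m Gi *m Qi^T = (t *: w)^T.
  by apply: trmx_inj; rewrite !trmx_mul !trmxK -!scalemxAr a2_stat mulmxA QiQiT mul1mx.
have a1_pE : dotv a1 (G *m Q^T *m (p - pi)) = - dotv w (p - pi).
  by rewrite dotv_mulmxr trmx_mul trmxK -mulmxA a1_stat mulmxN mulmxA QQT mul1mx dotvNl.
exists (t *: a1), (t *: a2); split.
- exact: dual_coneZ (ltW t_gt0) a1_dual.
- exact: dual_coneZ (ltW t_gt0) a2_dual.
- rewrite !dotvZl dotvDr a1_pE; have := mulr_gt0 t_gt0 val_gt0; lra.
- rewrite lamE norm2_rV trmxK sqnormN sqnormZ sqrtrM ?sqr_ge0 // sqrtr_sqr.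
  rewrite (ger0_norm (ltW t_gt0)) -norm2_cV /t mulrC.
  rewrite ler_pdivrMr ?ltr_wpDr ?norm2_cV ?sqrtr_ge0 //.
  by rewrite mul1r lerDr.
- by rewrite lamE nuE linearN.
Qed.

End Certificate.

Lemma certificate_of_dist_pos (R : realType) l n (K : set 'cV[R]_l)
  (G Gi : 'M[R]_(l, n)) (g gi : 'cV[R]_l) (Q Qi : 'M[R]_n) (p pi : 'cV[R]_n) :
  proper_cone K ->
  conic_set K G g !=set0 -> compact (conic_set K G g) ->
  conic_set K Gi gi !=set0 -> compact (conic_set K Gi gi) ->
  Q^T *m Q = 1%:M -> Qi^T *m Qi = 1%:M ->
  0 < set_dist (placed_set K G g Q p) (placed_set K Gi gi Qi pi) ->
  exists lam nu : 'cV[R]_l,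
     [/\ dual_cone K lam, dual_cone K nu,
         - dotv lam (G *m Q^T *m (p - pi) + g) - dotv nu gi > 0,
         norm2 (lam^T *m G *m Q^T) <= 1
       & lam^T *m G *m Q^T = - (nu^T *m Gi *m Qi^T)].
Proof.
move=> K_proper S_ne S_compact Si_ne Si_compact QTQ QiTQi dist_gt0.
have [[[y1 k1] [y2 k2]] [/= Kk1 Kk2] x_min] :=
  penalty_has_min Q Qi p pi K_proper S_ne S_compact Si_ne Si_compact.
apply: (@certificate_of_multipliers _ _ _ _ _ _ _ _ _ _ _ _ QTQ QiTQi
  (G *m y1 + k1 - g) (Gi *m y2 + k2 - gi) (Q *m y1 + p - (Qi *m y2 + pi))).
- exact (penalty_min_dual1 K_proper Kk1 Kk2 x_min).
- exact (penalty_min_dual2 K_proper Kk1 Kk2 x_min).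
- exact: penalty_min_stationary1 Kk1 Kk2 x_min.
- exact: penalty_min_stationary2 Kk1 Kk2 x_min.
- apply: lt_le_trans (penalty_min_value K_proper Kk1 Kk2 x_min).
  exact: penalty_min_gt0 Kk1 Kk2 dist_gt0.
Qed.

Theorem proposition1 (R : realType) (l n : nat) (K : set 'cV[R]_l)
  (G Gi : 'M[R]_(l, n)) (g gi : 'cV[R]_l) (Q Qi : 'M[R]_n) (p pi : 'cV[R]_n) :
  proper_cone K ->
  conic_set K G g !=set0 -> convex_set (conic_set K G g) ->
  compact (conic_set K G g) ->
  conic_set K Gi gi !=set0 -> convex_set (conic_set K Gi gi) ->
  compact (conic_set K Gi gi) ->
  rotation Q -> rotation Qi ->
  (0 < set_dist (placed_set K G g Q p) (placed_set K Gi gi Qi pi) <->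
   exists lam nu : 'cV[R]_l,
     [/\ dual_cone K lam, dual_cone K nu,
         - dotv lam (G *m Q^T *m (p - pi) + g) - dotv nu gi > 0,
         norm2 (lam^T *m G *m Q^T) <= 1
       & lam^T *m G *m Q^T = - (nu^T *m Gi *m Qi^T)]).
Proof.
(* Convexity of the conic sets is automatic, and of the rotations only Q^T Q = 1 is used. *)
move=> K_proper S_ne _ S_compact Si_ne _ Si_compact [QTQ _] [QiTQi _]; split.
  exact: certificate_of_dist_pos.
exact: dist_pos_of_certificate.
Qed.
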